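(* Let $p=p(n)\in[0,1]$ satisfy $p\ge \frac{51\log n}{n}$ and let $G\sim G(n,p)$. Then $$\lim_{n\to\infty}\Pr\big(\sigma(G)<\delta(G)\big)=1.$$
   Context: $G(n,p)$ is the Erdős–Rényi random graph on $n$ vertices in which each of the $\binom n2$ possible edges is present independently with probability $p$. For a graph $G$, the spanning tree packing number $\sigma(G)$ is the maximum number of pairwise edge-disjoint spanning trees contained in $G$, and $\delta(G)$ is the minimum degree of $G$. $\log$ denotes the natural logarithm. *)

From Stdlib Require Import Reals.
From mathcomp Require Import all_boot.
Set Implicit Arguments. Unset Strict Implicit. Unset Printing Implicit Defensive.

Definition all_pairs (n : nat) : {set {set 'I_n}} :=
  [set e : {set 'I_n} | #|e| == 2].

Definition is_graph n (G : {set {set 'I_n}}) : bool := G \subset all_pairs n.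

Definition adj n (G : {set {set 'I_n}}) : rel 'I_n :=
  fun x y => [set x; y] \in G.

Definition connected_spanning n (G : {set {set 'I_n}}) : bool :=
  [forall x, forall y, connect (adj G) x y].

(* A spanning tree of K_n: a set of n-1 edges forming a connected spanning
   subgraph (equivalently, connected and acyclic). *)
Definition spanning_tree n (T : {set {set 'I_n}}) : bool :=
  [&& is_graph T, connected_spanning T & #|T| == n.-1].

Definition packable n (G : {set {set 'I_n}}) (k : nat) : bool :=
  [exists f : {ffun 'I_k -> {set {set 'I_n}}},
     [forall i, spanning_tree (f i) && (f i \subset G)] &&
     [forall i, forall j, (i != j) ==> [disjoint f i & f j]]].

(* spanning tree packing number (for n >= 2 every tree has >= 1 edge, so
   at most #|G| disjoint trees fit and the bound below is no restriction) *)
Definition tree_packing_number n (G : {set {set 'I_n}}) : nat :=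
  \max_(k < #|G|.+1 | packable G k) k.

Definition degree n (G : {set {set 'I_n}}) (v : 'I_n) : nat :=
  #|[set e in G | v \in e]|.

(* minimum degree (degrees are < n, so the neutral element n is harmless) *)
Definition min_degree n (G : {set {set 'I_n}}) : nat :=
  \big[minn/n]_(v : 'I_n) degree G v.

Definition Rsum_seq (T : Type) (s : seq T) (f : T -> R) : R :=
  foldr (fun x acc => Rplus (f x) acc) R0 s.

Definition Gnp_prob (n : nat) (p : R) (P : {set {set 'I_n}} -> bool) : R :=
  Rsum_seq (enum (powerset (all_pairs n)))
    (fun G => if P G then
                Rmult (pow p #|G|) (pow (Rminus R1 p) (#|all_pairs n| - #|G|))
              else R0).

From Stdlib Require Import Reals Lra.
From mathcomp Require Import all_boot all_order all_algebra Rstruct.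
Set Implicit Arguments. Unset Strict Implicit. Unset Printing Implicit Defensive.
Import Order.TTheory GRing.Theory Num.Theory.

(* Every spanning tree has n-1 edges, so k disjoint ones use k(n-1) edges and
   sigma(G) (n-1) <= |G|.  Hence sigma(G) < delta(G) holds as soon as all
   degrees exceed a and |G| < b with b <= (n-1) a.  We take
   a = (11/20)(n-1)p and b = (21/20) C(n,2) p (so b <= (n-1) a for n >= 22)
   and bound both failure events by exponential moments: pointwise,
      1[sigma < delta] >= 1 - sum_v e^(s1 (a - deg v)) - e^(s2 (|G| - b)),
   and averaging over G(n,p) uses the explicit binomial generating functions
   of a degree (n-1 independent edges) and of |G| (C(n,2) edges).  With
   s1 = 2/5, s2 = 1/25 and p >= 51 log n / n each error term is at most 1/n
   once n >= 120, so 1 - 2/n <= P(sigma < delta) <= 1 and the limit is 1. *)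

Lemma card_all_pairs n : #|all_pairs n| = 'C(n, 2).
Proof. by rewrite /all_pairs card_draws card_ord. Qed.

Lemma card_pairs_at n (v : 'I_n) : #|[set e in all_pairs n | v \in e]| = n.-1.
Proof.
have -> : [set e in all_pairs n | v \in e] = (fun w => [set v; w]) @: [set~ v].
  apply/setP => e; rewrite !inE; apply/andP/imsetP.
    move=> [/cards2P [x [y [x_ne_y ->]]]].
    rewrite !inE => /orP[/eqP-> | /eqP->].
      by exists y => //; rewrite !inE eq_sym.
    by exists x; [rewrite !inE | rewrite setUC].
  move=> [w]; rewrite !inE => w_ne_v ->; split; last by rewrite !inE eqxx.
  by rewrite cards2 (eq_sym v) w_ne_v.
rewrite card_in_imset ?cardsC1 ?card_ord // => w1 w2; rewrite !inE => w1_ne_v _ same_pair.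
have : w1 \in [set v; w2] by rewrite -same_pair !inE eqxx orbT.
by rewrite !inE (negbTE w1_ne_v) => /eqP.
Qed.

Lemma packable_card n (G : {set {set 'I_n}}) k :
  packable G k -> k * n.-1 <= #|G|.
Proof.
case/existsP=> f /andP[/forallP trees /forallP disj].
have sizeF i : #|f i| = n.-1 by case/andP: (trees i) => /and3P[_ _ /eqP].
have subG : \bigcup_i f i \subset G by apply/bigcupsP => i _; case/andP: (trees i).
have disjF i j : i != j -> [disjoint f i & f j] by apply/implyP/(forallP (disj i)).
have <- : \sum_(i < k) #|f i| = k * n.-1.
  by rewrite (eq_bigr _ (fun i _ => sizeF i)) sum_nat_const card_ord.
apply: leq_trans (subset_leq_card subG).
by rewrite -sum1_card partition_disjoint_bigcup //; under eq_bigr do rewrite sum1_card.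
Qed.

Lemma tree_packing_card n (G : {set {set 'I_n}}) : tree_packing_number G * n.-1 <= #|G|.
Proof.
apply: (big_ind (fun k => k * n.-1 <= #|G|)) => //.
  by move=> k l; rewrite /maxn; case: ifP.
by move=> k /packable_card.
Qed.

Lemma min_degree_ind n (G : {set {set 'I_n}}) (P : nat -> Prop) :
  P n -> (forall v, P (degree G v)) -> P (min_degree G).
Proof. by move=> Pn Pdeg; apply: big_ind => // k l; rewrite /minn; case: ifP. Qed.

Local Open Scope ring_scope.

(* The deterministic criterion: if every degree exceeds a and |G| < b <= (n-1) a,
   then sigma(G) (n-1) <= |G| < (n-1) a < (n-1) delta(G). *)
Lemma sigma_lt_delta_of_counts n (G : {set {set 'I_n}}) (a b : R) :
  (1 < n)%N -> a < n%:R -> (forall v, a < (degree G v)%:R) ->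
  #|G|%:R < b -> b <= n.-1%:R * a ->
  (tree_packing_number G < min_degree G)%N.
Proof.
move=> n_gt1 a_lt_n deg_gt_a edges_lt_b b_le.
have delta_gt_a : a < (min_degree G)%:R.
  exact: (min_degree_ind (P := fun k => a < k%:R)).
have n1_gt0 : (0 < n.-1)%N by rewrite -ltnS prednK // ltnW.
rewrite -(ltn_pmul2r n1_gt0) -(ltr_nat R).
apply: (le_lt_trans (y := #|G|%:R)); first by rewrite ler_nat tree_packing_card.
apply: (lt_le_trans edges_lt_b); apply: (le_trans b_le).
rewrite natrM [X in _ <= X]mulrC ler_pM2l ?ltr0n //; exact: ltW.
Qed.

Lemma sum_powerset_prod (R : comNzRingType) (T : finType) (A : {set T}) (x y : T -> R) :
  \sum_(B in powerset A) \prod_(e in A) (if e \in B then x e else y e)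
  = \prod_(e in A) (x e + y e).
Proof.
pose F (e : T) (b : bool) : R :=
  if e \in A then (if b then x e else y e) else (if b then 0 else 1).
have -> : \prod_(e in A) (x e + y e) = \prod_(e : T) \sum_(b : bool) F e b.
  rewrite [LHS]big_mkcond /=; apply: eq_bigr => e _.
  by rewrite big_bool /F; case: (e \in A) => //=; rewrite add0r.
rewrite bigA_distr_bigA /= (reindex (fun B : {set T} => [ffun e => e \in B])) /=; last first.
  exists (fun f : {ffun T -> bool} => [set e | f e]) => [B _|f _].
    by apply/setP => e; rewrite inE ffunE.
  by apply/ffunP => e; rewrite ffunE inE.
rewrite [LHS]big_mkcond /=; apply: eq_bigr => B _.
rewrite powersetE; have [subBA | /subsetPn[e eB eNA]] := boolP (B \subset A).
  rewrite [LHS]big_mkcond /=; apply: eq_bigr => e _; rewrite ffunE /F.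
  by case: ifPn => // eNA; case: ifPn => // /(subsetP subBA); rewrite (negbTE eNA).
by rewrite (bigD1 e) //= ffunE /F (negbTE eNA) eB mul0r.
Qed.

Lemma subset_weight_prod (R : comNzRingType) (T : finType) (A B : {set T}) (p : R) (g : T -> R) :
  B \subset A ->
  p ^+ #|B| * (1 - p) ^+ (#|A| - #|B|) * \prod_(e in B) g e
  = \prod_(e in A) (if e \in B then p * g e else 1 - p).
Proof.
move=> subBA.
have inB : \prod_(e in A | e \in B) (if e \in B then p * g e else 1 - p)
    = p ^+ #|B| * \prod_(e in B) g e.
  rewrite (eq_bigl (mem B)) => [|e]; last by rewrite /= andb_idl // => /(subsetP subBA).
  rewrite (eq_bigr (fun e => p * g e)) => [|e eB]; last by rewrite ifT.
  by rewrite big_split prodr_const.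
have outB : \prod_(e in A | e \notin B) (if e \in B then p * g e else 1 - p)
    = (1 - p) ^+ (#|A| - #|B|).
  rewrite (eq_bigl (mem (A :\: B))) => [|e]; last by rewrite /= inE andbC.
  rewrite (eq_bigr (fun _ => 1 - p)) => [|e]; last by move=> /setDP[_ eNB]; rewrite ifN.
  by rewrite prodr_const cardsD (setIidPr subBA).
by rewrite mulrAC -inB -outB -bigID.
Qed.

Lemma binomial_mgf (R : comNzRingType) (T : finType) (A : {set T}) (p : R) (g : T -> R) :
  \sum_(B in powerset A) p ^+ #|B| * (1 - p) ^+ (#|A| - #|B|) * \prod_(e in B) g e
  = \prod_(e in A) (p * g e + (1 - p)).
Proof.
rewrite -sum_powerset_prod; apply: eq_bigr => B; rewrite powersetE.
exact: subset_weight_prod.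
Qed.

Definition Gnp_weight n (p : R) (G : {set {set 'I_n}}) : R :=
  p ^+ #|G| * (1 - p) ^+ (#|all_pairs n| - #|G|).

Lemma Rsum_seqE (T : Type) (s : seq T) (f : T -> R) : Rsum_seq s f = \sum_(x <- s) f x.
Proof. by elim: s => [|x s IH] /=; rewrite ?big_nil ?big_cons // IH. Qed.

Lemma Gnp_probE n (p : R) (P : {set {set 'I_n}} -> bool) :
  Gnp_prob p P = \sum_(G in powerset (all_pairs n)) (if P G then Gnp_weight p G else 0).
Proof.
rewrite /Gnp_prob Rsum_seqE big_enum /=; apply: eq_bigr => G _.
by rewrite /Gnp_weight !RpowE.
Qed.

Lemma Gnp_weight_ge0 n (p : R) (G : {set {set 'I_n}}) :
  0 <= p -> p <= 1 -> 0 <= Gnp_weight p G.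
Proof. by move=> p_ge0 p_le1; rewrite mulr_ge0 ?exprn_ge0 ?subr_ge0. Qed.

Lemma Gnp_weight_sum n (p : R) :
  \sum_(G in powerset (all_pairs n)) Gnp_weight p G = 1.
Proof.
have <- : \prod_(e in all_pairs n) (p * 1 + (1 - p)) = 1.
  by rewrite big1 // => e _; rewrite mulr1 addrC subrK.
by rewrite -binomial_mgf; apply: eq_bigr => G _; rewrite big1 ?mulr1.
Qed.

Lemma Gnp_prob_le1 n (p : R) (P : {set {set 'I_n}} -> bool) :
  0 <= p -> p <= 1 -> Gnp_prob p P <= 1.
Proof.
move=> p_ge0 p_le1; rewrite Gnp_probE -(Gnp_weight_sum n p); apply: ler_sum => G _.
by case: ifP => _; rewrite ?Gnp_weight_ge0.
Qed.

Lemma Gnp_mgf_degree n (p u : R) (v : 'I_n) :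
  \sum_(G in powerset (all_pairs n)) Gnp_weight p G * u ^+ degree G v
  = (p * u + (1 - p)) ^+ n.-1.
Proof.
rewrite -(card_pairs_at v) -prodr_const.
have -> : \prod_(e in [set e in all_pairs n | v \in e]) (p * u + (1 - p))
    = \prod_(e in all_pairs n) (p * (if v \in e then u else 1) + (1 - p)).
  rewrite [RHS]big_mkcond [LHS]big_mkcond; apply: eq_bigr => e _.
  by rewrite inE; case: (e \in all_pairs n); case: (v \in e); rewrite //= mulr1 addrC subrK.
rewrite -binomial_mgf; apply: eq_bigr => G _; congr (_ * _).
by rewrite -big_mkcondr -prodr_const; apply: eq_bigl => e; rewrite inE.
Qed.

Lemma Gnp_mgf_edges n (p u : R) :
  \sum_(G in powerset (all_pairs n)) Gnp_weight p G * u ^+ #|G|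
  = (p * u + (1 - p)) ^+ #|all_pairs n|.
Proof. by rewrite -prodr_const -binomial_mgf; apply: eq_bigr => G _; rewrite prodr_const. Qed.

Lemma exp_shifted_pow_ge0 (c s : R) k : 0 <= exp c * exp s ^+ k.
Proof. by rewrite expRX expRD; apply/RleP/Rlt_le/exp_pos. Qed.

Lemma exp_shifted_pow_ge1 (c s : R) k : 0 <= c + k%:R * s -> 1 <= exp c * exp s ^+ k.
Proof.
move=> exponent_ge0; rewrite expRX expRD.
have /RleP := exp_ineq1_le (c + s *+ k); rewrite RplusE => exp_ge_1Dx.
by apply: le_trans exp_ge_1Dx; rewrite lerDl -mulr_natl.
Qed.

(* The pointwise exponential-moment inequality: a low degree makes the sum over
   v at least 1, and many edges make the last term at least 1; otherwise the
   deterministic criterion applies. *)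
Lemma sigma_lt_delta_indicator n (G : {set {set 'I_n}}) (a b s1 s2 : R) :
  (1 < n)%N -> 0 <= s1 -> 0 <= s2 -> a < n%:R -> b <= n.-1%:R * a ->
  1 - \sum_(v : 'I_n) exp (s1 * a) * exp (- s1) ^+ degree G v
    - exp (- (s2 * b)) * exp s2 ^+ #|G|
  <= (if (tree_packing_number G < min_degree G)%N then 1 else 0).
Proof.
move=> n_gt1 s1_ge0 s2_ge0 a_lt_n b_le.
set S := \sum_(v : 'I_n) _; set T := exp _ * _.
have S_ge0 : 0 <= S by apply: sumr_ge0 => v _; exact: exp_shifted_pow_ge0.
have T_ge0 : 0 <= T by exact: exp_shifted_pow_ge0.
case: ifP => [_ | no_event]; first by rewrite -addrA -opprD lerBlDr lerDl addr_ge0.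
rewrite subr_le0.
have [[v deg_le_a] | deg_gt_a] :
    (exists v, (degree G v)%:R <= a) \/ (forall v, a < (degree G v)%:R).
  case: (pickP (fun v => (degree G v)%:R <= a)) => [v ? | none]; first by left; exists v.
  by right=> v; rewrite ltNge none.
- have S_ge1 : 1 <= S.
    rewrite /S (bigD1 v) //= -[1]addr0 lerD ?sumr_ge0 // => [|w _]; last first.
      exact: exp_shifted_pow_ge0.
    apply: exp_shifted_pow_ge1.
    by rewrite mulrN (mulrC _ s1) -mulrBr mulr_ge0 // subr_ge0.
  by apply: le_trans T_ge0; rewrite subr_le0.
- have edges_ge_b : b <= #|G|%:R.
    rewrite leNgt; apply/negP => edges_lt_b.
    by rewrite (sigma_lt_delta_of_counts n_gt1 a_lt_n deg_gt_a edges_lt_b b_le) in no_event.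
  have T_ge1 : 1 <= T.
    apply: exp_shifted_pow_ge1.
    by rewrite addrC (mulrC _ s2) -mulrBr mulr_ge0 // subr_ge0.
  by apply: le_trans T_ge1; rewrite lerBlDr lerDl.
Qed.

Lemma Gnp_mean_error_terms n (p c1 u1 c2 u2 : R) :
  \sum_(G in powerset (all_pairs n))
     Gnp_weight p G * (1 - \sum_(v : 'I_n) c1 * u1 ^+ degree G v - c2 * u2 ^+ #|G|)
  = 1 - n%:R * (c1 * (p * u1 + (1 - p)) ^+ n.-1)
      - c2 * (p * u2 + (1 - p)) ^+ #|all_pairs n|.
Proof.
under eq_bigr do rewrite mulrBr mulrBr mulr1.
rewrite !sumrB Gnp_weight_sum; congr (_ - _ - _).
  under eq_bigr do rewrite mulr_sumr.
  rewrite exchange_big /=.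
  under eq_bigr do under eq_bigr do rewrite mulrCA.
  under eq_bigr do rewrite -mulr_sumr Gnp_mgf_degree.
  by rewrite sumr_const card_ord mulr_natl.
under eq_bigr do rewrite mulrCA.
by rewrite -mulr_sumr Gnp_mgf_edges.
Qed.

Lemma Gnp_sigma_lt_delta_chernoff n (p a b s1 s2 : R) :
  (1 < n)%N -> 0 <= p -> p <= 1 -> 0 <= s1 -> 0 <= s2 -> a < n%:R -> b <= n.-1%:R * a ->
  1 - n%:R * (exp (s1 * a) * (p * exp (- s1) + (1 - p)) ^+ n.-1)
    - exp (- (s2 * b)) * (p * exp s2 + (1 - p)) ^+ #|all_pairs n|
  <= Gnp_prob p (fun G : {set {set 'I_n}} => (tree_packing_number G < min_degree G)%N).
Proof.
move=> n_gt1 p_ge0 p_le1 s1_ge0 s2_ge0 a_lt_n b_le.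
rewrite -Gnp_mean_error_terms Gnp_probE; apply: ler_sum => G _.
have -> : (if (tree_packing_number G < min_degree G)%N then Gnp_weight p G else 0)
    = Gnp_weight p G * (if (tree_packing_number G < min_degree G)%N then 1 else 0).
  by case: ifP; rewrite ?mulr1 ?mulr0.
apply: ler_wpM2l; first exact: Gnp_weight_ge0.
exact: sigma_lt_delta_indicator.
Qed.

Local Close Scope ring_scope.
Local Open Scope R_scope.

Lemma exp_monotone (x y : R) : x <= y -> exp x <= exp y.
Proof. by case/Rle_lt_or_eq_dec => [/exp_increasing/Rlt_le | ->] //; apply: Rle_refl. Qed.

Lemma exp_pow_nat (x : R) (k : nat) : exp x ^ k = exp (INR k * x).
Proof. by rewrite RpowE expRX -mulr_natl INRE. Qed.

(* The factor of a binomial generating function is at most exp (k p (u - 1)),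
   by 1 + x <= e^x. *)
Lemma binomial_factor_le_exp (p u : R) (k : nat) :
  0 <= p <= 1 -> 0 <= u -> (p * u + (1 - p)) ^ k <= exp (INR k * (p * (u - 1))).
Proof.
move=> p01 u_ge0; rewrite -exp_pow_nat; apply: pow_incr; split; first by nra.
by apply: Rle_trans (exp_ineq1_le _); lra.
Qed.

Lemma exp_neg_le_inv_pow (x y : R) (m : nat) :
  0 < x -> INR m * ln x <= y -> exp (- y) <= / x ^ m.
Proof.
move=> x_gt0 y_ge; have xm_gt0 : 0 < x ^ m by apply: pow_lt.
have /exp_monotone : - y <= - ln (x ^ m) by rewrite ln_pow //; lra.
by rewrite [exp (- ln _)]exp_Ropp exp_ln.
Qed.

Lemma exp_neg_two_fifths_le : exp (- (2/5)) <= 5/7.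
Proof.
rewrite exp_Ropp -(Rinv_inv (5/7)); apply: Rinv_le_contravar; first lra.
by apply: Rle_trans (exp_ineq1_le _); lra.
Qed.

Lemma exp_one_25th_le : exp (1/25) <= 25/24.
Proof.
rewrite -(Ropp_involutive (1/25)) exp_Ropp -(Rinv_inv (25/24)).
apply: Rinv_le_contravar; first lra.
by apply: Rle_trans (exp_ineq1_le _); lra.
Qed.

Lemma ln_ge0_of (x : R) : 1 <= x -> 0 <= ln x.
Proof.
case/Rle_lt_or_eq_dec => [x_gt1 | <-]; last by rewrite ln_1; apply: Rle_refl.
by have := ln_increasing _ _ Rlt_0_1 x_gt1; rewrite ln_1; lra.
Qed.

(* The low-degree error term: n e^(s1 a) (p e^(-s1) + 1 - p)^(n-1)
   <= n e^(-(23/350)(n-1)p) <= 1/n, with x = n and k = n - 1. *)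
Lemma low_degree_error (x p : R) (k : nat) :
  3 <= x -> INR k = x - 1 -> 0 <= p <= 1 -> 51 * ln x <= p * x ->
  x * (exp (2/5 * (11/20 * INR k * p)) * (p * exp (- (2/5)) + (1 - p)) ^ k) <= / x.
Proof.
move=> x_ge3 k_eq p01 p_large; have x_gt0 : 0 < x by lra.
have ln_ge0 : 0 <= ln x by apply: ln_ge0_of; lra.
have factor_le : (p * exp (- (2/5)) + (1 - p)) ^ k <= exp (INR k * (p * (5/7 - 1))).
  apply: Rle_trans (binomial_factor_le_exp k p01 (Rlt_le _ _ (exp_pos _))) _.
  apply/exp_monotone/Rmult_le_compat_l; first by rewrite k_eq; lra.
  by apply: Rmult_le_compat_l; have := exp_neg_two_fifths_le; lra.
have rate : INR 2 * ln x <= 23/350 * INR k * p.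
  apply: (Rmult_le_reg_l x); first lra.
  have := Rmult_le_compat_l (23/350 * (x - 1)) _ _ ltac:(lra) p_large.
  have : 0 <= ln x * (473 * x - 1173) by apply: Rmult_le_pos; lra.
  rewrite k_eq /=; nra.
have error_le : exp (2/5 * (11/20 * INR k * p)) * (p * exp (- (2/5)) + (1 - p)) ^ k
    <= / x ^ 2.
  apply: Rle_trans (exp_neg_le_inv_pow x_gt0 rate).
  have -> : - (23/350 * INR k * p) = 2/5 * (11/20 * INR k * p) + INR k * (p * (5/7 - 1))
    by field.
  by rewrite exp_plus; apply: Rmult_le_compat_l factor_le; apply/Rlt_le/exp_pos.
have -> : / x = x * / x ^ 2 by field; lra.
by apply: Rmult_le_compat_l error_le; lra.
Qed.

(* The many-edges error term: e^(-s2 b) (p e^(s2) + 1 - p)^C(n,2)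
   <= e^(-C(n,2) p / 3000) <= 1/n, with x = n and m = C(n,2). *)
Lemma many_edges_error (x p : R) (m : nat) :
  120 <= x -> 2 * INR m = x * (x - 1) -> 0 <= p <= 1 -> 51 * ln x <= p * x ->
  exp (- (1/25 * (21/20 * INR m * p))) * (p * exp (1/25) + (1 - p)) ^ m <= / x.
Proof.
move=> x_ge120 m_eq p01 p_large; have x_gt0 : 0 < x by lra.
have ln_ge0 : 0 <= ln x by apply: ln_ge0_of; lra.
have factor_le : (p * exp (1/25) + (1 - p)) ^ m <= exp (INR m * (p * (25/24 - 1))).
  apply: Rle_trans (binomial_factor_le_exp m p01 (Rlt_le _ _ (exp_pos _))) _.
  apply/exp_monotone/Rmult_le_compat_l; first exact: pos_INR.
  by apply: Rmult_le_compat_l; have := exp_one_25th_le; lra.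
have rate : INR 1 * ln x <= 1/3000 * INR m * p.
  have mp : 2 * INR m * p = (x - 1) * (p * x) by rewrite m_eq; ring.
  have := Rmult_le_compat_l (x - 1) _ _ ltac:(lra) p_large.
  have : 0 <= ln x * (51 * x - 6051) by apply: Rmult_le_pos; lra.
  rewrite /=; nra.
rewrite -(pow_1 x); apply: Rle_trans (exp_neg_le_inv_pow x_gt0 rate).
have -> : - (1/3000 * INR m * p) = - (1/25 * (21/20 * INR m * p)) + INR m * (p * (25/24 - 1))
  by field.
by rewrite exp_plus; apply: Rmult_le_compat_l factor_le; apply/Rlt_le/exp_pos.
Qed.

Lemma INR_pred_nat (n : nat) : (0 < n)%N -> INR n.-1 = INR n - 1.
Proof. by case: n => // k _; rewrite S_INR /=; ring. Qed.

Lemma INR_choose2 (n : nat) : 2 * INR 'C(n, 2) = INR n * (INR n - 1).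
Proof.
case: n => [|k]; first by rewrite /=; ring.
have E : (2 * 'C(k.+1, 2) = k * k.+1)%N by rewrite mul_bin_left bin1 subn1.
by have := f_equal INR E; rewrite -!multE !mult_INR !S_INR INR_0; lra.
Qed.

Lemma Gnp_sigma_lt_delta_chernoff_INR n (p a b s1 s2 : R) :
  (1 < n)%N -> 0 <= p <= 1 -> 0 <= s1 -> 0 <= s2 -> a < INR n -> b <= INR n.-1 * a ->
  1 - INR n * (exp (s1 * a) * (p * exp (- s1) + (1 - p)) ^ n.-1)
    - exp (- (s2 * b)) * (p * exp s2 + (1 - p)) ^ 'C(n, 2)
  <= Gnp_prob p (fun G : {set {set 'I_n}} => (tree_packing_number G < min_degree G)%N).
Proof.
move=> n_gt1 [p_ge0 p_le1] /RleP s1_ge0 /RleP s2_ge0 /RltP a_lt_n /RleP b_le.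
rewrite -card_all_pairs !RpowE INRE; apply/RleP.
by apply: Gnp_sigma_lt_delta_chernoff => //; [exact/RleP | exact/RleP | |];
  rewrite -INRE.
Qed.

Lemma Gnp_sigma_lt_delta_ge n (p : R) :
  (120 <= n)%N -> 0 <= p <= 1 -> 51 * ln (INR n) <= p * INR n ->
  1 - 2 / INR n
  <= Gnp_prob p (fun G : {set {set 'I_n}} => (tree_packing_number G < min_degree G)%N).
Proof.
move=> n_ge120 p01 p_large.
have x_ge120 : 120 <= INR n by have := le_INR _ _ (ssrnat.leP n_ge120); rewrite INR_IZR_INZ.
have n_gt1 : (1 < n)%N by apply: leq_trans n_ge120.
have k_eq : INR n.-1 = INR n - 1 by apply/INR_pred_nat/ltnW.
have m_eq := INR_choose2 n.
have a_lt_n : 11/20 * INR n.-1 * p < INR n by rewrite k_eq; nra.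
have b_le : 21/20 * INR 'C(n, 2) * p <= INR n.-1 * (11/20 * INR n.-1 * p).
  have : 0 <= (INR n - 1) * p * (INR n / 40 - 11/20) by apply: Rmult_le_pos; nra.
  rewrite k_eq; nra.
have := Gnp_sigma_lt_delta_chernoff_INR (s1 := 2/5) (s2 := 1/25) n_gt1 p01
  ltac:(lra) ltac:(lra) a_lt_n b_le.
have := @low_degree_error (INR n) p n.-1 ltac:(lra) k_eq p01 p_large.
have := @many_edges_error (INR n) p 'C(n, 2) ltac:(lra) m_eq p01 p_large.
rewrite /Rdiv; lra.
Qed.

Lemma mul_le_of_div_le (a p x : R) : 0 < x -> a / x <= p -> a <= p * x.
Proof.
move=> x_gt0 /(Rmult_le_compat_r x _ _ (Rlt_le _ _ x_gt0)).
by rewrite /Rdiv Rmult_assoc Rinv_l; lra.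
Qed.

Lemma Un_cv_one_squeeze (u : nat -> R) (c : R) (N : nat) :
  (forall n, (N <= n)%N -> 1 - c / INR n <= u n <= 1) -> Un_cv u 1.
Proof.
move=> bounds eps eps_gt0; have [K K_gt] := INR_unbounded (c / eps).
exists (maxn N K.+1) => n /ssrnat.leP; rewrite geq_max => /andP[N_le K_lt].
have n_gt_K : INR K < INR n by apply/lt_INR/ssrnat.leP.
have n_gt0 : 0 < INR n by apply: Rle_lt_trans (pos_INR K) n_gt_K.
have c_lt : c < eps * INR n.
  have := Rmult_lt_compat_l eps _ _ eps_gt0 (Rgt_lt _ _ K_gt).
  by rewrite /Rdiv -Rmult_assoc Rinv_r_simpl_m; nra.
have : c / INR n < eps.
  by apply/(Rmult_lt_reg_r (INR n)) => //; rewrite /Rdiv Rmult_assoc Rinv_l; lra.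
have [u_lower u_le1] := bounds n N_le.
by rewrite /R_dist Rabs_left1; lra.
Qed.

Local Close Scope R_scope.

Theorem theorem1p3 (p : nat -> R) :
  (forall n : nat, Rle R0 (p n) /\ Rle (p n) R1) ->
  (exists N : nat, forall n : nat, (N <= n)%N ->
      Rle (Rdiv (Rmult (INR 51) (ln (INR n))) (INR n)) (p n)) ->
  Un_cv (fun n => @Gnp_prob n (p n) (fun G => tree_packing_number G < min_degree G)) R1.
Proof.
move=> p_range [N p_large].
apply: (@Un_cv_one_squeeze _ 2 (maxn N 120)) => n; rewrite geq_max => /andP[N_le n_ge120].
have [p_ge0 p_le1] := p_range n.
split; last by apply/RleP/Gnp_prob_le1; apply/RleP.
apply: Gnp_sigma_lt_delta_ge => //.
apply: mul_le_of_div_le; last by have := p_large n N_le; rewrite INR_IZR_INZ.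
by apply: lt_0_INR; apply/ssrnat.leP; exact: leq_trans n_ge120.
Qed.
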